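(* For $\mu\in\mathcal{B}$ define $T_\mu: B_{X_\mu^*}\to[-1,1]^V$ by $T_\mu(f)(0_V)=0$ and $T_\mu(f)(u)=f(u)/\mu(u)$ for $u\in V\setminus\{0_V\}$, and let $K_\mu=T_\mu(B_{X_\mu^*})$. Then the set $K=\{(\mu,g)\in\mathcal{B}\times[-1,1]^V: g\in K_\mu\}$ is closed in $\mathcal{B}\times[-1,1]^V$ (product topology, $[-1,1]^V$ with the product topology).
   Context: $V$ is the set of finitely supported rational sequences; $\mathcal{P}\subset\mathbb{R}^V$ the seminorms on $V$ with pointwise convergence topology; for $\mu\in\mathcal{P}$, $\bar\mu$ is its seminorm extension to $c_{00}$ and $X_\mu$ the completion of $c_{00}/\{\bar\mu=0\}$; $\mathcal{B}$ is the set of $\mu\in\mathcal{P}$ with $X_\mu$ infinite-dimensional and $\bar\mu$ a norm on $c_{00}$, with the subspace topology. For $\mu\in\mathcal{B}$, $V\subset c_{00}\subset X_\mu$ and $\mu(u)>0$ for $u\ne0_V$. *)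

From HB Require Import structures.
From mathcomp Require Import all_boot all_order all_algebra.
From mathcomp Require Import all_classical all_reals all_analysis.
Set Implicit Arguments. Unset Strict Implicit. Unset Printing Implicit Defensive.
Import Order.TTheory GRing.Theory Num.Theory.
Local Open Scope ring_scope.
Local Open Scope classical_set_scope.

Definition fsupp (T : Type) (z : T) (x : nat -> T) : Prop :=
  exists N, forall n, (N <= n)%N -> x n = z.

Definition V : Type := {x : nat -> rat | fsupp 0 x}.

Definition c00 (R : realType) : Type := {x : nat -> R | fsupp 0 x}.

Lemma inclV_proof (R : realType) (v : V) :
  fsupp (0 : R) (fun n => ratr (proj1_sig v n)).
Proof.
case: v => x [N HN] /=; exists N => n Hn; by rewrite HN // rmorph0.
Qed.

Definition inclV (R : realType) (v : V) : c00 R :=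
  exist _ (fun n => ratr (proj1_sig v n)) (inclV_proof R v).

Definition isV0 (u : V) : Prop := forall n, proj1_sig u n = 0.

Definition is_seminormV (R : realType) (mu : V -> R) : Prop :=
  (forall u v w : V, (forall n, proj1_sig w n = proj1_sig u n + proj1_sig v n) ->
     mu w <= mu u + mu v) /\
  (forall (q : rat) (u w : V), (forall n, proj1_sig w n = q * proj1_sig u n) ->
     mu w = `|ratr q : R| * mu u).

Definition is_seminorm_c00 (R : realType) (nu : c00 R -> R) : Prop :=
  (forall x y z : c00 R,
     (forall n, proj1_sig z n = proj1_sig x n + proj1_sig y n) ->
     nu z <= nu x + nu y) /\
  (forall (a : R) (x z : c00 R), (forall n, proj1_sig z n = a * proj1_sig x n) ->
     nu z = `|a| * nu x).

Definition is_norm_c00 (R : realType) (nu : c00 R -> R) : Prop :=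
  is_seminorm_c00 nu /\ forall x, nu x = 0 -> forall n, proj1_sig x n = 0.

Definition seminorm_ext (R : realType) (mu : V -> R) (nu : c00 R -> R) : Prop :=
  is_seminorm_c00 nu /\ forall v : V, nu (inclV R v) = mu v.

(* mubar : the seminorm extension of mu to c00 (it exists and is unique when
   mu is a seminorm; default 0 otherwise). *)
Definition mubar (R : realType) (mu : V -> R) : c00 R -> R :=
  match pselect (exists nu, seminorm_ext mu nu) with
  | left H => proj1_sig (cid H)
  | right _ => fun _ => 0
  end.

(* X_mu = completion of c00 / {mubar = 0} is infinite-dimensional: for every n
   there are n vectors of c00 linearly independent modulo the kernel of mubar
   (the completion of a normed space has the same finite dimension as it,
   if any). *)
Definition Xmu_infinite_dim (R : realType) (mu : V -> R) : Prop :=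
  forall (n : nat), exists x : 'I_n -> c00 R,
    forall (a : 'I_n -> R) (z : c00 R),
      (forall k, proj1_sig z k = \sum_(i < n) a i * proj1_sig (x i) k) ->
      mubar mu z = 0 -> forall i, a i = 0.

Definition Bset (R : realType) : set (V -> R) :=
  [set mu | is_seminormV mu /\ Xmu_infinite_dim mu /\ is_norm_c00 (mubar mu)].

Arguments Bset : clear implicits.
Definition cube (R : realType) : set (V -> R) :=
  [set g | forall u, -1 <= g u <= 1].

Arguments cube : clear implicits.
(* Closed unit ball of X_mu^*: a functional in B_{X_mu^*} is the same as (the
   unique continuous extension of) a linear functional f on c00 with
   |f x| <= mubar x, since c00/{mubar = 0} is dense in X_mu. *)
Definition dual_ball (R : realType) (mu : V -> R) : set (c00 R -> R) :=
  [set f | (forall x y z : c00 R,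
              (forall n, proj1_sig z n = proj1_sig x n + proj1_sig y n) ->
              f z = f x + f y) /\
           (forall (a : R) (x z : c00 R),
              (forall n, proj1_sig z n = a * proj1_sig x n) -> f z = a * f x) /\
           (forall x, `|f x| <= mubar mu x)].

Definition Tmu (R : realType) (mu : V -> R) (f : c00 R -> R) : V -> R :=
  fun u => if pselect (isV0 u) then 0 else f (inclV R u) / mu u.

Definition Kmu (R : realType) (mu : V -> R) : set (V -> R) :=
  [set g | exists2 f, dual_ball mu f & g = Tmu mu f].

Definition Kset (R : realType) : set ((V -> R) * (V -> R)) :=
  [set p | Bset R p.1 /\ cube R p.2 /\ Kmu p.1 p.2].
Arguments Kset : clear implicits.

From HB Require Import structures.
From mathcomp Require Import all_boot all_order all_algebra.
From mathcomp Require Import all_classical all_reals all_analysis.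
From mathcomp Require Import lra.
Import numFieldNormedType.Exports.
Import Order.TTheory GRing.Theory Num.Theory.
Local Open Scope ring_scope.
Local Open Scope classical_set_scope.

(* For g = T_mu f the product g(u) mu(u) = f(u) is the restriction to V of a
   linear functional, so it is determined by its values phi_k = g(e_k) mu(e_k)
   on the unit vectors: g(u) mu(u) = sum_k u_k phi_k for every u in V.  These
   identities involve finitely many coordinates of (mu, g) each, so they cut
   out a closed set.  Conversely, if (mu, g) is in B x [-1,1]^V and satisfies
   them, then f = sum_k x_k phi_k is linear on c00 and |f| <= mu on V.  Since
   a seminorm is bounded on vectors supported in [0, N) by the l1 norm weighted
   by its values on e_0, ..., e_(N-1), V is dense in c00 for mubar, hence
   |f| <= mubar on c00: f lies in the dual ball and g = T_mu f. *)

Definition vanish_from {T : zmodType} (x : nat -> T) (N : nat) : Prop :=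
  forall n, (N <= n)%N -> x n = 0.

Lemma sum_vanish_from {T : zmodType} {G : nat -> T} {N M} :
  vanish_from G N -> (N <= M)%N -> \sum_(k < M) G k = \sum_(k < N) G k.
Proof.
move=> GN NM; rewrite (big_ord_widen M G NM) [RHS]big_mkcond.
by apply: eq_bigr => k _; case: ltnP => // /GN.
Qed.

Definition mk_V {q : nat -> rat} {N} (qN : vanish_from q N) : V :=
  exist _ q (ex_intro _ N qN).

Lemma indicator_vanish_from {T : zmodType} (one : T) k :
  vanish_from (fun n => one *+ (n == k)) k.+1.
Proof. by move=> n kn; rewrite (gtn_eqF kn). Qed.

Definition V_unit (k : nat) : V := mk_V (indicator_vanish_from (1 : rat) k).

Section C00.
Variable R : realType.

Definition mk_c00 {x : nat -> R} {N} (xN : vanish_from x N) : c00 R :=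
  exist _ x (ex_intro _ N xN).

Definition c00_unit (k : nat) : c00 R := mk_c00 (indicator_vanish_from (1 : R) k).

Definition c00_bound (x : c00 R) : nat := sval (cid (svalP x)).

Lemma c00_boundP x : vanish_from (sval x) (c00_bound x).
Proof. exact: svalP (cid (svalP x)). Qed.

Lemma inclV_vanish_from (v : V) N :
  vanish_from (sval v) N -> vanish_from (sval (inclV R v)) N.
Proof. by move=> vN n Nn; rewrite /= vN // rmorph0. Qed.

Definition c00_subadditive (h : c00 R -> R) : Prop :=
  forall x y z : c00 R, (forall n, sval z n = sval x n + sval y n) ->
    h z <= h x + h y.

Definition c00_additive (h : c00 R -> R) : Prop :=
  forall x y z : c00 R, (forall n, sval z n = sval x n + sval y n) ->
    h z = h x + h y.

Definition c00_scalable_by (s : R -> R) (h : c00 R -> R) : Prop :=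
  forall a (x z : c00 R), (forall n, sval z n = a * sval x n) -> h z = s a * h x.

Lemma le_sum_c00_unit (h : c00 R -> R) (s : R -> R) :
  s 0 = 0 -> c00_subadditive h -> c00_scalable_by s h ->
  forall N (d : c00 R), vanish_from (sval d) N ->
  h d <= \sum_(k < N) s (sval d k) * h (c00_unit k).
Proof.
move=> s0 hD hZ; elim=> [|N IH] d dN.
  by rewrite big_ord0 (hZ 0 d d) ?s0 ?mul0r // => n; rewrite mul0r dN.
have headN : vanish_from (fun n => if (n < N)%N then sval d n else 0) N.
  by move=> n Nn; rewrite ltnNge Nn.
have lastN : vanish_from (fun n => sval d N * (n == N)%:R) N.+1.
  by move=> n Nn; rewrite (gtn_eqF Nn) mulr0.
set dh := mk_c00 headN; set dl := mk_c00 lastN.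
have hdl : h dl = s (sval d N) * h (c00_unit N) by exact: hZ.
rewrite big_ord_recr /= -hdl; apply: le_trans (hD dh dl d _) (lerD _ (lexx _)).
  move=> n /=; case: ltngtP => [||->]; rewrite ?mulr0 ?mulr1 ?addr0 ?add0r //.
  by move=> /dN ->.
suff -> : \sum_(k < N) s (sval d k) * h (c00_unit k)
        = \sum_(k < N) s (sval dh k) * h (c00_unit k) by exact: IH.
by apply: eq_bigr => k _; rewrite /= ltn_ord.
Qed.

Lemma c00_additive_expand (f : c00 R -> R) :
  c00_additive f -> c00_scalable_by id f ->
  forall N (d : c00 R), vanish_from (sval d) N ->
  f d = \sum_(k < N) sval d k * f (c00_unit k).
Proof.
move=> fD fZ N d dN; apply/le_anti/andP; split.
  by apply: (le_sum_c00_unit f id) dN => // x y z /fD ->.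
have fND : c00_subadditive (fun x => - f x).
  by move=> x y z /fD ->; rewrite opprD.
have fNZ : c00_scalable_by id (fun x => - f x).
  by move=> a x z /fZ ->; rewrite mulrN.
rewrite -lerN2 -sumrN; under eq_bigr do rewrite -mulrN.
exact: (le_sum_c00_unit (fun x => - f x) id) dN.
Qed.

Lemma seminorm_ge0 (nu : c00 R -> R) : is_seminorm_c00 nu -> forall x, 0 <= nu x.
Proof.
move=> [nuD nuZ] x.
have zeroN : vanish_from (fun=> 0 : R) 0 by [].
have oppN : vanish_from (fun n => - sval x n) (c00_bound x).
  by move=> n /c00_boundP ->; rewrite oppr0.
have nu0 : nu (mk_c00 zeroN) = 0.
  by rewrite (nuZ 0 x) ?normr0 ?mul0r // => n; rewrite mul0r.
have nuN : nu (mk_c00 oppN) = nu x.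
  by rewrite (nuZ (-1) x) ?normrN ?normr1 ?mul1r // => n; rewrite mulN1r.
have := nuD x (mk_c00 oppN) (mk_c00 zeroN); rewrite nu0 nuN.
by move=> /(_ (fun n => esym (subrr _))); lra.
Qed.

Definition c00_comb (phi : nat -> R) (x : c00 R) : R :=
  \sum_(k < c00_bound x) sval x k * phi k.

Lemma c00_combE phi {x N} : vanish_from (sval x) N ->
  c00_comb phi x = \sum_(k < N) sval x k * phi k.
Proof.
have summandN M : vanish_from (sval x) M -> vanish_from (fun k => sval x k * phi k) M.
  by move=> xM n /xM ->; rewrite mul0r.
move=> xN; rewrite /c00_comb.
rewrite -(sum_vanish_from (summandN _ (c00_boundP x)) (leq_maxl _ N)).
by rewrite (sum_vanish_from (summandN _ xN) (leq_maxr _ N)).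
Qed.

Lemma c00_comb_additive phi : c00_additive (c00_comb phi).
Proof.
move=> x y z zE; set N := maxn (c00_bound x) (c00_bound y).
have xN : vanish_from (sval x) N.
  by move=> n /(leq_trans (leq_maxl _ _)) /c00_boundP.
have yN : vanish_from (sval y) N.
  by move=> n /(leq_trans (leq_maxr _ _)) /c00_boundP.
have zN : vanish_from (sval z) N by move=> n Nn; rewrite zE xN ?yN ?addr0.
rewrite !(c00_combE _ xN, c00_combE _ yN, c00_combE _ zN) -big_split /=.
by apply: eq_bigr => k _; rewrite zE mulrDl.
Qed.

Lemma c00_comb_scalable phi : c00_scalable_by id (c00_comb phi).
Proof.
move=> a x z zE; have xN := c00_boundP x.
have zN : vanish_from (sval z) (c00_bound x) by move=> n /xN xn; rewrite zE xn mulr0.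
rewrite (c00_combE _ zN) (c00_combE _ xN) mulr_sumr.
by apply: eq_bigr => k _; rewrite zE mulrA.
Qed.

Lemma c00_rat_approx (x : c00 R) (e : R) : 0 < e ->
  exists2 v : V, vanish_from (sval v) (c00_bound x) &
    forall k, `|sval x k - ratr (sval v k)| < e.
Proof.
move=> e0; have /choice [q qP] : forall k, exists q : rat, `|sval x k - ratr q| < e.
  move=> k; have [q] := @rat_in_itvoo R (sval x k - e) (sval x k + e) ltac:(lra).
  by rewrite in_itv /= => /andP[? ?]; exists q; rewrite ltr_norml; apply/andP; split; lra.
have xN := c00_boundP x.
have qN : vanish_from (fun n => if (n < c00_bound x)%N then q n else 0) (c00_bound x).
  by move=> n Nn; rewrite ltnNge Nn.
exists (mk_V qN) => // k /=; case: ltnP => // /xN ->.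
by rewrite rmorph0 subrr normr0.
Qed.

Lemma c00_comb_le_seminorm (phi : nat -> R) (nu : c00 R -> R) :
  is_seminorm_c00 nu ->
  (forall v : V, `|c00_comb phi (inclV R v)| <= nu (inclV R v)) ->
  forall x, `|c00_comb phi x| <= nu x.
Proof.
move=> nu_semi onV x; have [nuD nuZ] := nu_semi.
set N := c00_bound x; have xN : vanish_from (sval x) N := c00_boundP x.
set S := \sum_(k < N) (`|phi k| + nu (c00_unit k)).
have S0 : 0 <= S.
  by apply: sumr_ge0 => k _; apply: addr_ge0 => //; exact: seminorm_ge0.
apply/ler_addgt0Pr => e e0.
have S1 : 0 < S + 1 by lra.
have [v vN vx] := c00_rat_approx x _ (divr_gt0 e0 S1).
set del := e / (S + 1) in vx.
have delS : del * S <= e.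
  rewrite /del mulrAC ler_pdivrMr //; lra.
have uN := inclV_vanish_from v N vN.
have diffN : vanish_from (fun n => ratr (sval v n) - sval x n) N.
  by move=> n Nn; rewrite vN // xN // rmorph0 subr0.
set d := mk_c00 diffN.
have comb_near : `|c00_comb phi x - c00_comb phi (inclV R v)|
    <= del * \sum_(k < N) `|phi k|.
  rewrite (c00_combE _ xN) (c00_combE _ uN) -sumrB mulr_sumr.
  apply: le_trans (ler_norm_sum _ _ _) (ler_sum _ _) => k _.
  by rewrite -mulrBl normrM ler_wpM2r // ltW.
have nu_near : nu (inclV R v) <= nu x + del * \sum_(k < N) nu (c00_unit k).
  apply: le_trans (nuD x d _ _) (lerD (lexx _) _) => [n /=|]; first by rewrite addrC subrK.
  apply: le_trans (le_sum_c00_unit nu Num.norm (normr0 _) nuD nuZ _ d diffN) _.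
  rewrite mulr_sumr; apply: ler_sum => k _.
  by rewrite distrC ler_wpM2r ?(seminorm_ge0 _ nu_semi) ?ltW.
have := onV v; have := ler_normD (c00_comb phi (inclV R v))
  (c00_comb phi x - c00_comb phi (inclV R v)).
rewrite addrC subrK; move: delS; rewrite /S big_split mulrDr /=; lra.
Qed.

End C00.

Section B.
Context {R : realType} {mu : V -> R} (muB : Bset R mu).

Lemma Bset_mubar_ext : seminorm_ext mu (mubar mu).
Proof.
case: muB => _ [_ [_]]; rewrite /mubar; case: pselect => [ext _ | _ mu_norm].
  exact: svalP (cid ext).
by have /eqP := mu_norm (c00_unit R 0) erefl 0; rewrite oner_eq0.
Qed.

Lemma Bset_ge0 v : 0 <= mu v.
Proof. by have [nu_semi <-] := Bset_mubar_ext; exact: seminorm_ge0. Qed.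

Lemma Bset_neq0 v : ~ isV0 v -> mu v != 0.
Proof.
move=> v_nz; apply/eqP => mu0; apply: v_nz => n.
have [_ mubarE] := Bset_mubar_ext; case: muB => _ [_ [_ mu_norm]].
have /(_ n) /eqP := mu_norm (inclV R v) (etrans (mubarE v) mu0).
by rewrite fmorph_eq0 => /eqP.
Qed.

Lemma Tmu_mulr f u : dual_ball mu f -> Tmu mu f u * mu u = f (inclV R u).
Proof.
move=> [_ [fZ _]]; rewrite /Tmu; case: pselect => [u0 | u_nz].
  by rewrite mul0r (fZ 0 (inclV R u)) ?mul0r // => n; rewrite /= u0 rmorph0 mul0r.
by rewrite divfK // Bset_neq0.
Qed.

End B.

Lemma closed_zeroset (T : topologicalType) (R : realType) (F : T -> R) :
  continuous F -> closed [set t | F t = 0].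
Proof.
move=> F_cont; apply: (preimage_closed (D := [set x | x = 0])) => [t _|].
  exact: F_cont.
exact: closed_eq.
Qed.

Section ClosedGraph.
Variable R : realType.
Notation P := ({ptws V -> R} * {ptws V -> R})%type.

Lemma eval_fst_continuous (v : V) : continuous (fun p : P => p.1 v).
Proof.
move=> p; apply: (@continuous_comp P _ _ fst (fun f : {ptws V -> R} => f v)).
  exact: cvg_fst.
exact: (@proj_continuous {classic V} (fun=> R) v).
Qed.

Lemma eval_snd_continuous (v : V) : continuous (fun p : P => p.2 v).
Proof.
move=> p; apply: (@continuous_comp P _ _ snd (fun f : {ptws V -> R} => f v)).
  exact: cvg_snd.
exact: (@proj_continuous {classic V} (fun=> R) v).
Qed.

Definition comb_defect (v : V) (N : nat) (p : P) : R :=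
  p.2 v * p.1 v - \sum_(k < N) ratr (sval v k) * (p.2 (V_unit k) * p.1 (V_unit k)).

Lemma comb_defect_continuous v N : continuous (comb_defect v N).
Proof.
have evM u : continuous (fun p : P => p.2 u * p.1 u).
  by move=> p; exact: cvgM (eval_snd_continuous u p) (eval_fst_continuous u p).
have sumC : continuous (fun p : P =>
    \sum_(k < N) ratr (sval v k) * (p.2 (V_unit k) * p.1 (V_unit k))).
  apply: continuous_big => [|k _ q]; first exact: add_continuous.
  exact: cvgM (cvg_cst _) (evM _ q).
move=> p; exact: cvgB (evM v p) (sumC p).
Qed.

(* The first family encodes the convention T_mu f (0_V) = 0, which the
   identities g(v) mu(v) = sum_k v_k phi_k cannot see since mu(0_V) = 0. *)
Definition comb_consistent : set P :=
  (\bigcap_(v in isV0) [set p : P | p.2 v = 0]) `&`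
  (\bigcap_(i in [set i : V * nat | vanish_from (sval i.1) i.2])
     [set p : P | comb_defect i.1 i.2 p = 0]).

Lemma comb_consistent_closed : closed comb_consistent.
Proof.
apply: closedI; apply: closed_bigI => i _.
  exact/closed_zeroset/eval_snd_continuous.
exact/closed_zeroset/comb_defect_continuous.
Qed.

Lemma Kset_sub_comb_consistent : Kset R `<=` comb_consistent.
Proof.
move=> [mu g] [/= muB [_ [f fB ->]]]; split=> [v v0 | [v N] vN] /=.
  by rewrite /Tmu; case: pselect.
have [fD [fZ _]] := fB.
rewrite /comb_defect /= Tmu_mulr //.
rewrite (c00_additive_expand _ f fD fZ N _ (inclV_vanish_from _ v N vN)).
apply/eqP; rewrite subr_eq0; apply/eqP/eq_bigr => k _.
rewrite Tmu_mulr // (fZ 1 (c00_unit R k) (inclV R (V_unit k))) ?mul1r // => n.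
by rewrite /= rmorph_nat mul1r.
Qed.

Lemma comb_consistent_Kmu (mu g : V -> R) :
  Bset R mu -> cube R g -> comb_consistent (mu, g) -> Kmu mu g.
Proof.
move=> muB gc [g0 gcomb]; set phi := fun k => g (V_unit k) * mu (V_unit k).
have combE (v : V) N : vanish_from (sval v) N -> c00_comb R phi (inclV R v) = g v * mu v.
  move=> vN; have /eqP := gcomb (v, N) vN; rewrite subr_eq0 => /eqP ->.
  by rewrite (c00_combE _ phi (inclV_vanish_from _ v N vN)).
have [nu_semi mubarE] := Bset_mubar_ext muB.
exists (c00_comb R phi).
  split; [exact: c00_comb_additive | split; first exact: c00_comb_scalable].
  apply: c00_comb_le_seminorm => // v; have [N vN] := svalP v.
  rewrite (combE v N vN) mubarE normrM (ger0_norm (Bset_ge0 muB v)).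
  by rewrite ler_piMl ?(Bset_ge0 muB) // ler_norml; exact: gc.
apply/funext => u; rewrite /Tmu; case: pselect => [/g0 // | u_nz].
by have [N uN] := svalP u; rewrite (combE u N uN) mulfK // Bset_neq0.
Qed.

End ClosedGraph.

Theorem lemma4p1 (R : realType) :
  exists C : set ({ptws V -> R} * {ptws V -> R}),
    closed C /\ Kset R = C `&` (Bset R `*` cube R).
Proof.
exists (comb_consistent R); split; first exact: comb_consistent_closed.
apply/seteqP; split=> [[mu g] Kp | [mu g] [Cp [muB gc]]].
  split; first exact: Kset_sub_comb_consistent.
  by case: Kp => muB [gc _].
by split=> //; split=> //; exact: comb_consistent_Kmu.
Qed.
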